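(* There exist two $k$-CNF formulae $\phi$ and $\psi$ (for some $k$) such that $\phi$ is satisfiable and $\psi$ is unsatisfiable, but $\phi\sim\psi$, i.e. they cannot be distinguished by the 1-WL test.
   Context: A $k$-CNF formula $\phi=\{C_1,\ldots,C_m\}$ over letters $p_1,\ldots,p_n$ is encoded as a labelled bipartite graph $G_\phi$: constraint nodes $v_1,\ldots,v_m$ (one per clause) labelled $b_i=1-$(number of negative literals in $C_i$); variable nodes $w_1,\ldots,w_n$ (one per letter) all with the same (empty) label; an edge $v_iw_j$ labelled $E_{ij}=1$ if $p_j\in C_i$, $-1$ if $\neg p_j\in C_i$, and no edge if $p_j$ does not occur in $C_i$. The 1-WL colouring of $G_\phi$: initial colours $C^V_0(v)=\mathtt{Colour}^V_0(\text{label}(v))$, $C^W_0(w)=\mathtt{Colour}^W_0(\text{label}(w))$; for $i=1,\ldots,|V\cup W|$, $C^V_i(v)=\mathtt{Colour}^V_i(C^V_{i-1}(v),\{\!\{(C^W_{i-1}(w),E_{vw}) : w\in N(v)\}\!\})$ and $C^W_i(w)=\mathtt{Colour}^W_i(C^W_{i-1}(w),\{\!\{(C^V_{i-1}(v),E_{vw}) : v\in N(w)\}\!\})$, where the $\mathtt{Colour}$ maps are injective into natural numbers not previously used; the output is the final pair of colourings. $\phi\sim\psi$ means that running this procedure on $G_\phi$ and $G_\psi$ gives the same outputs (same colour multisets) for all choices of the injective colouring functions. *)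

From mathcomp Require Import all_boot all_order all_algebra.
Set Implicit Arguments. Unset Strict Implicit. Unset Printing Implicit Defensive.
Import GRing.Theory Num.Theory.

(* A CNF formula with m clauses over n letters p_0..p_{n-1}:
   phi i j = None      : p_j does not occur in clause C_i
   phi i j = Some true : p_j  occurs in C_i (positive literal)
   phi i j = Some false: ~p_j occurs in C_i (negative literal)        *)
Definition cnf (m n : nat) := 'I_m -> 'I_n -> option bool.

Definition is_kcnf (k m n : nat) (phi : cnf m n) : Prop :=
  forall i : 'I_m, #|[pred j : 'I_n | phi i j != None]| <= k.

Definition satisfies (m n : nat) (phi : cnf m n) (a : 'I_n -> bool) : Prop :=
  forall i : 'I_m, exists j : 'I_n, phi i j = Some (a j).

Definition satisfiable (m n : nat) (phi : cnf m n) : Prop :=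
  exists a : 'I_n -> bool, satisfies phi a.

Definition edge_label (b : bool) : int := if b then 1%R else (-1)%R.

Definition constraint_label (m n : nat) (phi : cnf m n) (i : 'I_m) : int :=
  (1 - (#|[pred j : 'I_n | phi i j == Some false]| : int))%R.

(* Round 0 uses c0V (on constraint
   labels) and c0W (on the unique empty variable label); round i >= 1 uses
   cV i and cW i, taking the previous colour and the multiset of
   (neighbour colour, edge label) pairs, the multiset being represented by a
   sequence considered up to permutation. *)
Record wl_colours := WLColours {
  c0V : int -> nat;
  c0W : unit -> nat;
  cV : nat -> nat -> seq (nat * int) -> nat;
  cW : nat -> nat -> seq (nat * int) -> nat }.

Definition in_round (C : wl_colours) (r x : nat) : Prop :=
  match r with
  | 0 => (exists l, c0V C l = x) \/ (exists u, c0W C u = x)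
  | _ => (exists c s, cV C r c s = x) \/ (exists c s, cW C r c s = x)
  end.

Definition mset_injective (f : nat -> seq (nat * int) -> nat) : Prop :=
  forall c c' s s', f c s = f c' s' <-> (c = c' /\ perm_eq s s').

Definition valid_colours (C : wl_colours) : Prop :=
  [/\ injective (c0V C), injective (c0W C),
      (forall r, 0 < r -> mset_injective (cV C r) /\ mset_injective (cW C r))
    & (forall r r' x, r' < r -> in_round C r x -> ~ in_round C r' x)].

Section WL.
Variables (m n : nat) (phi : cnf m n) (C : wl_colours).

Definition nbV (CW : 'I_n -> nat) (v : 'I_m) : seq (nat * int) :=
  pmap (fun w => omap (fun b => (CW w, edge_label b)) (phi v w)) (enum 'I_n).

Definition nbW (CV : 'I_m -> nat) (w : 'I_n) : seq (nat * int) :=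
  pmap (fun v => omap (fun b => (CV v, edge_label b)) (phi v w)) (enum 'I_m).

Fixpoint wl (r : nat) : ('I_m -> nat) * ('I_n -> nat) :=
  match r with
  | 0 => (fun v => c0V C (constraint_label phi v), fun _ => c0W C tt)
  | r'.+1 =>
      let CVW := wl r' in
      (fun v => cV C r (CVW.1 v) (nbV CVW.2 v),
       fun w => cW C r (CVW.2 w) (nbW CVW.1 w))
  end.

(* output: final colourings after |V u W| = m + n rounds *)
Definition wl_output := wl (m + n).

End WL.

Definition wl_equiv (m n m' n' : nat) (phi : cnf m n) (psi : cnf m' n') : Prop :=
  forall C : wl_colours, valid_colours C ->
    perm_eq [seq (wl_output phi C).1 v | v <- enum 'I_m]
            [seq (wl_output psi C).1 v | v <- enum 'I_m'] /\
    perm_eq [seq (wl_output phi C).2 w | w <- enum 'I_n]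
            [seq (wl_output psi C).2 w | w <- enum 'I_n'].

From mathcomp Require Import all_boot all_order all_algebra.
Set Implicit Arguments. Unset Strict Implicit. Unset Printing Implicit Defensive.
Import GRing.Theory.

(* Both formulas assert p_e <> p_(g e) for every letter e, where g is a
   fixed-point-free permutation of six letters: x |-> x + 1 on Z/6 (a hexagon,
   which is 2-colourable) and x |-> x + 2 on Z/6 (two triangles, which are
   not).  In the graph of any such formula each positive clause has label 1
   and two (+1)-edges, each negative clause has label -1 and two (-1)-edges,
   and each variable lies in exactly two clauses of either sign.  By induction
   on the rounds, 1-WL colours every clause by its sign alone and all
   variables alike, with colours that do not depend on g. *)

Lemma pmap_if_nseq (T U : Type) (P : pred T) (y : U) (s : seq T) :
  pmap (fun x => if P x then Some y else None) s = nseq (count P s) y.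
Proof. by elim: s => //= x s ->; case: (P x). Qed.

Lemma pmap_map (T U V : Type) (f : U -> option V) (h : T -> U) (s : seq T) :
  pmap f (map h s) = pmap (f \o h) s.
Proof. by elim: s => //= x s ->. Qed.

Lemma count_enum_card (T : finType) (P : pred T) : count P (enum T) = #|P|.
Proof. by rewrite enumT cardE /enum_mem size_filter. Qed.

Lemma enum_ord_add m n :
  enum 'I_(m + n) = map (lshift n) (enum 'I_m) ++ map (@rshift m n) (enum 'I_n).
Proof.
apply: (inj_map val_inj); rewrite val_enum_ord map_cat iotaD add0n.
congr (_ ++ _); rewrite -map_comp.
  exact/esym/val_enum_ord.
by rewrite -[m in iota m]addn0 iotaDl -val_enum_ord -map_comp.
Qed.

Definition clause_var n (i : 'I_(n + n)) : 'I_n :=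
  match split i with inl e | inr e => e end.

Lemma clause_var_lshift n (e : 'I_n) : clause_var (lshift n e) = e.
Proof. by rewrite /clause_var (unsplitK (inl e)). Qed.

Lemma clause_var_rshift n (e : 'I_n) : clause_var (rshift n e) = e.
Proof. by rewrite /clause_var (unsplitK (inr e)). Qed.

(* Clause [lshift n e] is [p_e \/ p_(g e)] and clause [rshift n e] is
   [~ p_e \/ ~ p_(g e)]; the sign of clause [i] is [i < n]. *)
Definition neq_cnf n (g : 'I_n -> 'I_n) : cnf (n + n) n := fun i j =>
  if pred2 (clause_var i) (g (clause_var i)) j then Some (i < n) else None.

Section NeqCnf.

Variables (n : nat) (g : 'I_n -> 'I_n).

Lemma neq_cnf_kcnf : is_kcnf 2 (neq_cnf g).
Proof.
move=> i; set e := clause_var i.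
apply: leq_trans (_ : #|pred2 e (g e)| <= 2); last by rewrite card2; case: eqP.
by apply: subset_leq_card; apply/subsetP => j; rewrite !inE /neq_cnf; case: ifP.
Qed.

Lemma neq_cnf_clause_sat (a : 'I_n -> bool) (i : 'I_(n + n)) :
  (exists j, neq_cnf g i j = Some (a j)) <->
  (a (clause_var i) == (i < n)) || (a (g (clause_var i)) == (i < n)).
Proof.
rewrite /neq_cnf; set e := clause_var i.
split=> [[j] | /orP[] /eqP a_s].
- by case: ifP => // /orP[] /eqP-> [->]; rewrite eqxx ?orbT.
- by exists e; rewrite /= eqxx a_s.
- by exists (g e); rewrite /= eqxx orbT a_s.
Qed.

Lemma satisfies_neq_cnf (a : 'I_n -> bool) :
  satisfies (neq_cnf g) a <-> forall e, a (g e) != a e.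
Proof.
split=> [sat_a e | proper_a i].
  have /neq_cnf_clause_sat := sat_a (lshift n e).
  have /neq_cnf_clause_sat := sat_a (rshift n e).
  rewrite clause_var_lshift clause_var_rshift /= ltn_ord ltnNge leq_addr.
  by case: (a e); case: (a (g e)).
apply/neq_cnf_clause_sat; move: (proper_a (clause_var i)).
by case: (a (clause_var i)); case: (a (g _)); case: (i < n).
Qed.

Lemma proper_colouring_iter (a : 'I_n -> bool) k e :
  (forall x, a (g x) != a x) -> a (iter k g e) = odd k (+) a e.
Proof.
move=> proper_a; elim: k => //= k IHk.
by move: (proper_a (iter k g e)); rewrite IHk; case: (a _); case: (odd k); case: (a e).
Qed.

Lemma neq_cnf_unsat_odd_cycle k e :
  odd k -> iter k g e = e -> ~ satisfiable (neq_cnf g).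
Proof.
move=> odd_k cycle_e [a /satisfies_neq_cnf proper_a].
by move: (proper_colouring_iter k e proper_a); rewrite cycle_e odd_k; case: (a e).
Qed.

Hypotheses (g_inj : injective g) (g_fpf : forall e, g e != e).

Lemma constraint_label_neq_cnf (i : 'I_(n + n)) :
  constraint_label (neq_cnf g) i = edge_label (i < n).
Proof.
rewrite /constraint_label /neq_cnf.
case: (i < n).
  by rewrite (eq_card0 (A := [pred j | _])) // => j; rewrite !inE; case: ifP.
rewrite (eq_card (B := pred2 (clause_var i) (g (clause_var i)))) => [|j].
  by rewrite card2 eq_sym g_fpf.
by rewrite !inE; case: ifP.
Qed.

Lemma nbV_neq_cnf (CW : 'I_n -> nat) c (i : 'I_(n + n)) :
  CW =1 (fun=> c) -> nbV (neq_cnf g) CW i = nseq 2 (c, edge_label (i < n)).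
Proof.
move=> CW_c; rewrite /nbV /neq_cnf.
under eq_pmap => j do rewrite CW_c (fun_if (omap _)).
by rewrite pmap_if_nseq count_enum_card card2 eq_sym g_fpf.
Qed.

Lemma card_neq_cnf_occurrences (w : 'I_n) :
  #|[pred e | pred2 e (g e) w]| = 2.
Proof.
rewrite (eq_card (B := pred2 w (invF g_inj w))) => [|e].
  rewrite card2 (_ : w != _) //.
  by apply: contra (g_fpf w) => /eqP {1}->; rewrite f_invF.
by rewrite !inE eq_sym (eq_sym w) (can2_eq (invF_f g_inj) (f_invF g_inj)).
Qed.

Lemma nbW_neq_cnf (CV : 'I_(n + n) -> nat) (col : bool -> nat) (w : 'I_n) :
  CV =1 (fun i => col (i < n)) ->
  nbW (neq_cnf g) CV w =
    nseq 2 (col true, edge_label true) ++ nseq 2 (col false, edge_label false).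
Proof.
move=> CV_col; rewrite /nbW enum_ord_add pmap_cat.
rewrite (pmap_map _ (lshift n)) (pmap_map _ (@rshift n n)).
congr (_ ++ _).
  under eq_pmap => e do
    rewrite /= /neq_cnf clause_var_lshift CV_col /= ltn_ord (fun_if (omap _)) /=.
  by rewrite pmap_if_nseq count_enum_card card_neq_cnf_occurrences.
under eq_pmap => e do
  rewrite /= /neq_cnf clause_var_rshift CV_col /= ltnNge leq_addr (fun_if (omap _)) /=.
by rewrite pmap_if_nseq count_enum_card card_neq_cnf_occurrences.
Qed.

(* The colour of a clause of each sign, and the colour of every variable. *)
Fixpoint regular_colours (C : wl_colours) (r : nat) : (bool -> nat) * nat :=
  if r is r'.+1 then
    let: (col, c) := regular_colours C r' in
    (fun s => cV C r (col s) (nseq 2 (c, edge_label s)),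
     cW C r c (nseq 2 (col true, edge_label true) ++ nseq 2 (col false, edge_label false)))
  else (fun s => c0V C (edge_label s), c0W C tt).

Lemma wl_neq_cnf C r :
  (wl (neq_cnf g) C r).1 =1 (fun i => (regular_colours C r).1 (i < n)) /\
  (wl (neq_cnf g) C r).2 =1 (fun=> (regular_colours C r).2).
Proof.
elim: r => [|r [IHV IHW]].
  by split=> //= i; rewrite constraint_label_neq_cnf.
rewrite /=; case: (regular_colours C r) IHV IHW => col c /= IHV IHW.
split=> [i|w]; first by rewrite IHV (nbV_neq_cnf _ IHW).
by rewrite IHW (nbW_neq_cnf _ IHV).
Qed.

End NeqCnf.

Lemma wl_equiv_neq_cnf n (g h : 'I_n -> 'I_n) :
  injective g -> (forall e, g e != e) -> injective h -> (forall e, h e != e) ->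
  wl_equiv (neq_cnf g) (neq_cnf h).
Proof.
(* No validity of C is needed: the two runs agree for any colouring maps. *)
move=> g_inj g_fpf h_inj h_fpf C _.
have [gV gW] := wl_neq_cnf g_inj g_fpf C (n + n + n).
have [hV hW] := wl_neq_cnf h_inj h_fpf C (n + n + n).
by rewrite /wl_output (eq_map gV) (eq_map hV) (eq_map gW) (eq_map hW).
Qed.

Lemma wl_equiv_translations n (c d : 'I_n.+1) :
  (c != 0 -> d != 0 -> wl_equiv (neq_cnf (+%R c)) (neq_cnf (+%R d)))%R.
Proof.
move=> c_neq0 d_neq0; apply: wl_equiv_neq_cnf => [|x||x];
  first [exact: addrI | by rewrite -subr_eq0 addrK].
Qed.

Definition hexagon_cnf : cnf (6 + 6) 6 := neq_cnf (+%R (1 : 'I_6)%R).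
Definition two_triangles_cnf : cnf (6 + 6) 6 := neq_cnf (+%R (2 : 'I_6)%R).

Lemma hexagon_satisfiable : satisfiable hexagon_cnf.
Proof.
by exists (fun x => odd x); apply/satisfies_neq_cnf => -[[|[|[|[|[|[|]]]]]]].
Qed.

Lemma two_triangles_unsat : ~ satisfiable two_triangles_cnf.
Proof.
apply: (neq_cnf_unsat_odd_cycle (k := 3) (e := 0%R)) => //.
by rewrite iter_addr addr0; apply: val_inj.
Qed.

Theorem proposition6 :
  exists (k m n m' n' : nat) (phi : cnf m n) (psi : cnf m' n'),
    [/\ is_kcnf k phi, is_kcnf k psi, satisfiable phi, ~ satisfiable psi
      & wl_equiv phi psi].
Proof.
exists 2, (6 + 6), 6, (6 + 6), 6, hexagon_cnf, two_triangles_cnf.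
split; [exact: neq_cnf_kcnf | exact: neq_cnf_kcnf | exact: hexagon_satisfiable
       | exact: two_triangles_unsat |].
exact: wl_equiv_translations.
Qed.
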